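(* Let $A=(A,\oplus,\odot)$ be a skew brace, and $D$ a cyclic characteristic subgroup of $A_{\oplus}$ such that $D\leq Z\left(A_{\oplus}^{(n)}\right)$ for some positive integer $n$. Then there exists a positive integer $m$ such that $A_{\odot}^{(m+n)}\leq C_{A_{\oplus}}(D)$.
   Context: A skew brace is a set $A$ with two binary operations $\oplus,\odot$ such that $A_{\oplus}=(A,\oplus)$ and $A_{\odot}=(A,\odot)$ are groups and $a\odot(b\oplus c)=(a\odot b)\ominus a\oplus(a\odot c)$ for all $a,b,c\in A$, where $\ominus a$ is the inverse of $a$ in $A_{\oplus}$. The derived series of a group $G$ is indexed by $G^{(1)}=G$, $G^{(i+1)}=[G^{(i)},G^{(i)}]$; $Z(G)$ denotes the center and $C_G(H)$ the centralizer of $H$ in $G$. *)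

Section Groups.
Variable T : Type.
Variables (op : T -> T -> T) (e : T) (iv : T -> T).

Definition is_group : Prop :=
  (forall x y z, op x (op y z) = op (op x y) z) /\
  (forall x, op e x = x) /\ (forall x, op x e = x) /\
  (forall x, op (iv x) x = e) /\ (forall x, op x (iv x) = e).

Inductive gen (S : T -> Prop) : T -> Prop :=
| gen_in : forall x, S x -> gen S x
| gen_one : gen S e
| gen_op : forall x y, gen S x -> gen S y -> gen S (op x y)
| gen_inv : forall x, gen S x -> gen S (iv x).

Definition is_subgroup (H : T -> Prop) : Prop :=
  H e /\ (forall x y, H x -> H y -> H (op x y)) /\ (forall x, H x -> H (iv x)).

Definition commg (x y : T) : T := op (op (iv x) (iv y)) (op x y).

Definition commutator_subgroup (H : T -> Prop) : T -> Prop :=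
  gen (fun z => exists x y, H x /\ H y /\ z = commg x y).

(* der k = G^(k+1) *)
Fixpoint der (k : nat) : T -> Prop :=
  match k with
  | O => fun _ => True
  | S k' => commutator_subgroup (der k')
  end.

(* derived series indexed as in the paper: G^(1) = G, G^(i+1) = [G^(i),G^(i)];
   used only for i >= 1 *)
Definition derived (i : nat) : T -> Prop := der (i - 1).

Definition center (H : T -> Prop) : T -> Prop :=
  fun x => H x /\ forall y, H y -> op x y = op y x.

Definition centralizer (D : T -> Prop) : T -> Prop :=
  fun x => forall d, D d -> op x d = op d x.

Definition is_cyclic_subgroup (D : T -> Prop) : Prop :=
  exists g, forall x, D x <-> gen (fun y => y = g) x.

Definition is_automorphism (f : T -> T) : Prop :=
  (forall x y, f (op x y) = op (f x) (f y)) /\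
  (forall x y, f x = f y -> x = y) /\ (forall y, exists x, f x = y).

Definition is_characteristic (D : T -> Prop) : Prop :=
  is_subgroup D /\ forall f, is_automorphism f -> forall x, D x -> D (f x).

Definition subset (A B : T -> Prop) : Prop := forall x, A x -> B x.

End Groups.

Definition is_skew_brace (A : Type)
  (add : A -> A -> A) (zero : A) (neg : A -> A)
  (mul : A -> A -> A) (one : A) (inv : A -> A) : Prop :=
  is_group A add zero neg /\ is_group A mul one inv /\
  forall a b c, mul a (add b c) = add (add (mul a b) (neg a)) (mul a c).

(* The maps a |-> lambda_a, lambda_a y = -a + a o y, and a |-> (y |-> a o y - a) = conj_a o lambda_a
   are actions of the multiplicative group by automorphisms of the additive group, so they leave
   the characteristic subgroup D invariant.  Since D is cyclic its endomorphisms commute, hence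
   every multiplicative commutator c acts trivially on D through both actions:
   -c + c o d = d and c o d - c = d, which together give c + d - c = d. *)
From Stdlib Require Import ZArith Lia.

Definition is_endomorphism (T : Type) (op : T -> T -> T) (f : T -> T) : Prop :=
  forall x y, f (op x y) = op (f x) (f y).

Section Group.
Context {T : Type} {op : T -> T -> T} {e : T} {iv : T -> T}.
Hypothesis G : is_group T op e iv.

Lemma mulgA x y z : op x (op y z) = op (op x y) z.
Proof. exact (proj1 G x y z). Qed.
Lemma mul1g x : op e x = x.
Proof. exact (proj1 (proj2 G) x). Qed.
Lemma mulg1 x : op x e = x.
Proof. exact (proj1 (proj2 (proj2 G)) x). Qed.
Lemma mulVg x : op (iv x) x = e.
Proof. exact (proj1 (proj2 (proj2 (proj2 G))) x). Qed.
Lemma mulgV x : op x (iv x) = e.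
Proof. exact (proj2 (proj2 (proj2 (proj2 G))) x). Qed.

Lemma mulKg x y : op (iv x) (op x y) = y.
Proof. rewrite mulgA, mulVg, mul1g; reflexivity. Qed.
Lemma mulKVg x y : op x (op (iv x) y) = y.
Proof. rewrite mulgA, mulgV, mul1g; reflexivity. Qed.
Lemma mulgK x y : op (op y x) (iv x) = y.
Proof. rewrite <- mulgA, mulgV, mulg1; reflexivity. Qed.
Lemma mulgKV x y : op (op y (iv x)) x = y.
Proof. rewrite <- mulgA, mulVg, mulg1; reflexivity. Qed.

Lemma mulgI a x y : op a x = op a y -> x = y.
Proof. intro E. rewrite <- (mulKg a x), E, mulKg. reflexivity. Qed.

Lemma invg_unique x y : op x y = e -> y = iv x.
Proof. intro E. apply (mulgI x). rewrite E, mulgV. reflexivity. Qed.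
Lemma invMg x y : iv (op x y) = op (iv y) (iv x).
Proof.
  symmetry. apply invg_unique.
  rewrite <- mulgA, (mulgA y), mulgV, mul1g, mulgV. reflexivity.
Qed.
Lemma invg1 : iv e = e.
Proof. symmetry. apply invg_unique, mul1g. Qed.
Lemma invgK x : iv (iv x) = x.
Proof. symmetry. apply invg_unique, mulVg. Qed.

Lemma morph1 f : is_endomorphism T op f -> f e = e.
Proof. intro Hf. apply (mulgI (f e)). rewrite <- Hf, !mulg1. reflexivity. Qed.
Lemma morphV f : is_endomorphism T op f -> forall x, f (iv x) = iv (f x).
Proof. intros Hf x. apply invg_unique. rewrite <- Hf, mulgV. exact (morph1 f Hf). Qed.

Fixpoint expgn (x : T) (k : nat) : T :=
  match k with O => e | S k' => op (expgn x k') x end.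

Definition expgz (x : T) (k : Z) : T :=
  if (0 <=? k)%Z then expgn x (Z.to_nat k) else iv (expgn x (Z.to_nat (- k))).

Lemma expgn_commute x k : op x (expgn x k) = op (expgn x k) x.
Proof.
  induction k as [|k IHk]; simpl.
  - rewrite mul1g, mulg1. reflexivity.
  - rewrite mulgA, IHk. reflexivity.
Qed.

Lemma expgzS x k : expgz x (Z.succ k) = op (expgz x k) x.
Proof.
  unfold expgz. destruct (Z.leb_spec 0 k).
  - rewrite (proj2 (Z.leb_le 0 (Z.succ k))) by lia.
    rewrite Z2Nat.inj_succ by lia. reflexivity.
  - destruct (Z.leb_spec 0 (Z.succ k)).
    + replace k with (-1)%Z by lia. simpl. rewrite mul1g, mulVg. reflexivity.
    + replace (Z.to_nat (- k)) with (S (Z.to_nat (- Z.succ k))) by lia. simpl.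
      rewrite <- expgn_commute, invMg, mulgKV. reflexivity.
Qed.

Lemma expgzP x k : expgz x (Z.pred k) = op (expgz x k) (iv x).
Proof. rewrite <- (Z.succ_pred k) at 2. rewrite expgzS, mulgK. reflexivity. Qed.

Lemma expgzD x a b : expgz x (a + b) = op (expgz x a) (expgz x b).
Proof.
  induction b as [|b IHb|b IHb] using Z.peano_ind.
  - rewrite Z.add_0_r, mulg1. reflexivity.
  - rewrite Z.add_succ_r, !expgzS, IHb, mulgA. reflexivity.
  - rewrite Z.add_pred_r, !expgzP, IHb, mulgA. reflexivity.
Qed.

Lemma expgzN x k : expgz x (- k) = iv (expgz x k).
Proof. apply invg_unique. rewrite <- expgzD, Z.add_opp_diag_r. reflexivity. Qed.

Lemma expgzM x a b : expgz (expgz x a) b = expgz x (a * b).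
Proof.
  induction b as [|b IHb|b IHb] using Z.peano_ind.
  - rewrite Z.mul_0_r. reflexivity.
  - rewrite expgzS, IHb, Z.mul_succ_r, expgzD. reflexivity.
  - rewrite expgzP, IHb, Z.mul_pred_r, <- Z.add_opp_r, expgzD, expgzN. reflexivity.
Qed.

Lemma morphX f : is_endomorphism T op f -> forall x k, f (expgz x k) = expgz (f x) k.
Proof.
  intros Hf x k. induction k as [|k IHk|k IHk] using Z.peano_ind.
  - exact (morph1 f Hf).
  - rewrite !expgzS, Hf, IHk. reflexivity.
  - rewrite !expgzP, Hf, IHk, (morphV f Hf). reflexivity.
Qed.

Lemma cycle_expgz g z : gen T op e iv (fun y => y = g) z -> exists k, z = expgz g k.
Proof.
  induction 1 as [z -> | | x y _ [a ->] _ [b ->] | x _ [a ->]].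
  - exists 1%Z. symmetry. apply mul1g.
  - exists 0%Z. reflexivity.
  - exists (a + b)%Z. rewrite expgzD. reflexivity.
  - exists (- a)%Z. rewrite expgzN. reflexivity.
Qed.

Lemma cyclic_endomorphisms_commute (D : T -> Prop) f h :
  is_cyclic_subgroup T op e iv D -> is_endomorphism T op f -> is_endomorphism T op h ->
  (forall d, D d -> D (f d)) -> (forall d, D d -> D (h d)) ->
  forall d, D d -> f (h d) = h (f d).
Proof.
  intros [g Dg] Hf Hh fD hD.
  assert (Dgg : D g) by (apply Dg, gen_in; reflexivity).
  destruct (cycle_expgz g _ (proj1 (Dg _) (fD _ Dgg))) as [a fg].
  destruct (cycle_expgz g _ (proj1 (Dg _) (hD _ Dgg))) as [b hg].
  intros d Dd. destruct (cycle_expgz g _ (proj1 (Dg _) Dd)) as [k ->].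
  rewrite (morphX h Hh), (morphX f Hf), hg, (morphX f Hf), fg, !expgzM.
  rewrite (morphX f Hf), (morphX h Hh), fg, (morphX h Hh), hg, !expgzM.
  f_equal. lia.
Qed.

End Group.

Section Action.
Context {M : Type} {mul : M -> M -> M} {one : M} {inv : M -> M}.
Context {T : Type} {add : T -> T -> T} {zero : T} {neg : T -> T}.
Hypotheses (GM : is_group M mul one inv) (GT : is_group T add zero neg).
Context {act : M -> T -> T}.
Hypothesis act_mul : forall a b y, act (mul a b) y = act a (act b y).
Hypothesis act_one : forall y, act one y = y.
Hypothesis act_morph : forall a, is_endomorphism T add (act a).

Lemma actKV a y : act (inv a) (act a y) = y.
Proof. rewrite <- act_mul, (mulVg GM). apply act_one. Qed.

Lemma actVK a y : act a (act (inv a) y) = y.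
Proof. rewrite <- act_mul, (mulgV GM). apply act_one. Qed.

Lemma act_automorphism a : is_automorphism T add (act a).
Proof.
  split; [apply act_morph | split].
  - intros x y E. rewrite <- (actKV a x), E. apply actKV.
  - intro y. exists (act (inv a) y). apply actVK.
Qed.

Lemma commutator_act_fix (D : T -> Prop) (H : M -> Prop) :
  is_cyclic_subgroup T add zero neg D -> is_characteristic T add zero neg D ->
  forall c, commutator_subgroup M mul one inv H c -> forall d, D d -> act c d = d.
Proof.
  intros Dcyc [_ Dchar].
  assert (actD : forall a d, D d -> D (act a d))
    by (intro a; apply Dchar, act_automorphism).
  induction 1 as [c [x [y [_ [_ ->]]]] | | x y _ IHx _ IHy | x _ IHx]; intros d Dd.
  - unfold commg. rewrite !act_mul.
    rewrite (cyclic_endomorphisms_commute GT D (act (inv y)) (act x)) by auto.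
    rewrite !actKV. reflexivity.
  - apply act_one.
  - rewrite act_mul, IHy, IHx; auto.
  - rewrite <- (IHx d Dd) at 1. apply actKV.
Qed.

End Action.

Section SkewBrace.
Context {A : Type} {add : A -> A -> A} {zero : A} {neg : A -> A}.
Context {mul : A -> A -> A} {one : A} {inv : A -> A}.
Hypotheses (Gadd : is_group A add zero neg) (Gmul : is_group A mul one inv).
Hypothesis mulDr : forall a b c, mul a (add b c) = add (add (mul a b) (neg a)) (mul a c).

Definition lambda (a y : A) : A := add (neg a) (mul a y).

Definition lambda_conj (a y : A) : A := add (mul a y) (neg a).

Lemma lambda_conjE a y : lambda_conj a y = add (add a (lambda a y)) (neg a).
Proof. unfold lambda_conj, lambda. rewrite (mulKVg Gadd). reflexivity. Qed.

Lemma one_zero : one = zero.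
Proof.
  assert (E := mulDr one zero zero).
  rewrite !(mul1g Gmul), !(mul1g Gadd), (mulg1 Gadd) in E.
  rewrite <- (invgK Gadd one), <- E. apply (invg1 Gadd).
Qed.

Lemma lambda_morph a : is_endomorphism A add (lambda a).
Proof. intros x y. unfold lambda. rewrite mulDr, !(mulgA Gadd). reflexivity. Qed.

Lemma lambda_conj_morph a : is_endomorphism A add (lambda_conj a).
Proof. intros x y. unfold lambda_conj. rewrite mulDr, !(mulgA Gadd). reflexivity. Qed.

Lemma lambda_one y : lambda one y = y.
Proof.
  unfold lambda. rewrite (mul1g Gmul), one_zero, (invg1 Gadd).
  apply (mul1g Gadd).
Qed.

Lemma lambda_conj_one y : lambda_conj one y = y.
Proof.
  unfold lambda_conj. rewrite (mul1g Gmul), one_zero, (invg1 Gadd).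
  apply (mulg1 Gadd).
Qed.

Lemma lambda_mul a b y : lambda (mul a b) y = lambda a (lambda b y).
Proof.
  unfold lambda at 3. rewrite (lambda_morph a (neg b)), (morphV Gadd _ (lambda_morph a)).
  unfold lambda. rewrite (invMg Gadd), (invgK Gadd).
  rewrite <- (mulgA Gadd), (mulKVg Gadd), (mulgA Gmul). reflexivity.
Qed.

Lemma lambda_conj_mul a b y : lambda_conj (mul a b) y = lambda_conj a (lambda_conj b y).
Proof.
  unfold lambda_conj at 3.
  rewrite (lambda_conj_morph a), (morphV Gadd _ (lambda_conj_morph a)).
  unfold lambda_conj. rewrite (invMg Gadd), (invgK Gadd).
  rewrite <- (mulgA Gadd), (mulKg Gadd), (mulgA Gmul). reflexivity.
Qed.

Lemma commutator_subgroup_centralizes (D H : A -> Prop) :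
  is_cyclic_subgroup A add zero neg D -> is_characteristic A add zero neg D ->
  subset A (commutator_subgroup A mul one inv H) (centralizer A add D).
Proof.
  intros Dcyc Dchar c Hc d Dd.
  assert (lambda_fix : lambda c d = d)
    by exact (commutator_act_fix Gmul Gadd lambda_mul lambda_one lambda_morph
                D H Dcyc Dchar c Hc d Dd).
  assert (lambda_conj_fix : lambda_conj c d = d)
    by exact (commutator_act_fix Gmul Gadd lambda_conj_mul lambda_conj_one lambda_conj_morph
                D H Dcyc Dchar c Hc d Dd).
  rewrite lambda_conjE, lambda_fix in lambda_conj_fix.
  rewrite <- lambda_conj_fix at 2. rewrite (mulgKV Gadd). reflexivity.
Qed.

End SkewBrace.

Theorem corollary4p5 (A : Type)
  (add : A -> A -> A) (zero : A) (neg : A -> A)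
  (mul : A -> A -> A) (one : A) (inv : A -> A)
  (HA : is_skew_brace A add zero neg mul one inv)
  (D : A -> Prop) (n : nat) (Hn : 0 < n)
  (Dcyc : is_cyclic_subgroup A add zero neg D)
  (Dchar : is_characteristic A add zero neg D)
  (DZ : subset A D (center A add (derived A add zero neg n))) :
  exists m : nat, 0 < m /\
    subset A (derived A mul one inv (m + n)) (centralizer A add D).
Proof.
  destruct HA as [Gadd [Gmul mulDr]].
  exists 1. split; [lia|].
  unfold derived. replace (1 + n - 1) with (S (n - 1)) by lia.
  exact (commutator_subgroup_centralizes Gadd Gmul mulDr D _ Dcyc Dchar).
Qed.
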